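(* In the setting described in the context, all initial stabilizers in the decoding subgraph of a reliable logical Pauli product are $+1$.
   Context: Setting: logical qubits encoded in distance-$d$ unrotated surface codes (CSS codes), each initialized in $|\overline{0}\rangle$ (all physical qubits in $|0\rangle$, so $Z$ stabilizers are $+1$ and $X$ stabilizers are uniformly random), $|\overline{+}\rangle$ (all physical qubits in $|+\rangle$, so $X$ stabilizers are $+1$ and $Z$ stabilizers random), or a magic state $|\overline{T}\rangle$ assumed to have all stabilizers $+1$; followed by transversal logical Clifford gates, each followed by one round of stabilizer measurement (SE), and logical $\overline{Z}$/$\overline{X}$ measurements by measuring all data qubits in $Z$/$X$. Each logical measurement product corresponds to a logical Pauli operator that can be back-propagated through the Clifford circuit. Reliable logical Pauli product: with $n$ logical qubits and $m$ measurements, identify a measurement product with $\vec v\in\mathbb{Z}_2^m$; let $M\in\mathbb{Z}_2^{2n\times m}$ have entry $(i,j)$ (resp. $(n+i,j)$) equal to $1$ iff the back-propagation of measurement $j$ to initialization has an $\overline X$- (resp. $\overline Z$-) component on qubit $i$; let $B$ contain the unit vectors $\vec e_{x,i}$ (position $i$) and $\vec e_{z,i}$ (position $n+i$) if qubit $i$ starts in $|\overline T\rangle$, only $\vec e_{z,i}$ if it starts in $|\overline0\rangle$, only $\vec e_{x,i}$ if it starts in $|\overline+\rangle$. The product is reliable if $M\vec v\in\operatorname{span}B$. Decoding subgraph of a logical Pauli product $\overline P$: back-propagate $\overline P$ through the circuit, giving at each time step $t$ an operator $\overline P^t=\overline O_1^t\otimes\cdots\otimes\overline O_n^t$ with $\overline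 O_j^t\in\{\overline I,\overline X,\overline Y,\overline Z\}$. Include the $X$-stabilizer checks of qubit $j$ at step $t$ if $\overline O_j^t\in\{\overline X,\overline Y\}$ and the $Z$-stabilizer checks if $\overline O_j^t\in\{\overline Z,\overline Y\}$, where a check is the product of a stabilizer measurement outcome with the measured value(s) of its back-propagation through the preceding gate at the previous SE round (at the first round, a deterministically-$+1$ initial stabilizer forms a check by itself). The initial stabilizers of the subgraph are those stabilizers, at initialization, of the qubits and bases included in the subgraph. *)

From HB Require Import structures.
From mathcomp Require Import all_boot all_order all_algebra.
Set Implicit Arguments. Unset Strict Implicit. Unset Printing Implicit Defensive.
Import GRing.Theory.
Local Open Scope ring_scope.

Inductive init_state := Init0 | InitPlus | InitT.

Inductive pbasis := BX | BZ.

(* A logical Pauli operator on n qubits up to phase: a row vector in F_2^{2n};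
   position i (= lshift n i) is the X-component of qubit i,
   position n+i (= rshift n i) is the Z-component of qubit i. *)
Definition pauli n := 'rV['F_2]_(n + n).

Definition xcomp n (p : pauli n) (i : 'I_n) : 'F_2 := p 0 (lshift n i).
Definition zcomp n (p : pauli n) (i : 'I_n) : 'F_2 := p 0 (rshift n i).

Definition e_x n (i : 'I_n) : pauli n := delta_mx 0 (lshift n i).
Definition e_z n (i : 'I_n) : pauli n := delta_mx 0 (rshift n i).
Definition pauli_unit n (i : 'I_n) (b : pbasis) : pauli n :=
  if b is BX then e_x i else e_z i.

Definition symp_form n : 'M['F_2]_(n + n) := block_mx 0 1%:M 1%:M 0.
Definition symplectic n (G : 'M['F_2]_(n + n)) : bool :=
  G *m symp_form n *m G^T == symp_form n.

(* A logical Clifford gate is represented by its Heisenberg back-propagation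
   action on Pauli vectors: a Pauli p right after the gate back-propagates to
   p *m G right before it.  [gates] = [G_1; ...; G_T] in time order. *)
Definition backprop n (gates : seq 'M['F_2]_(n + n)) (t : nat) (p : pauli n)
  : pauli n :=
  foldl (fun q G => q *m G) p (rev (take t gates)).

(* A logical measurement: performed after the first [mtime] gates, on qubit
   [mqubit], in basis [mbasis] (Z-bar or X-bar). *)
Record meas n := Meas { mtime : nat; mqubit : 'I_n; mbasis : pbasis }.

Definition meas_backprop n (gates : seq 'M['F_2]_(n + n)) (ms : meas n)
  : pauli n :=
  backprop gates (mtime ms) (pauli_unit (mqubit ms) (mbasis ms)).

(* The matrix M in Z_2^{2n x m}: column j is the back-propagation of
   measurement j (X-components in rows i, Z-components in rows n+i). *)
Definition meas_matrix n m (gates : seq 'M['F_2]_(n + n))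
  (ms : 'I_m -> meas n) : 'M['F_2]_(n + n, m) :=
  \matrix_(k, j) (meas_backprop gates (ms j)) 0 k.

Definition init_units n (s : init_state) (i : 'I_n) : seq (pauli n) :=
  match s with
  | InitT => [:: e_x i; e_z i]
  | Init0 => [:: e_z i]
  | InitPlus => [:: e_x i]
  end.
Definition Bset n (init : 'I_n -> init_state) : seq (pauli n) :=
  flatten [seq init_units (init i) i | i <- enum 'I_n].

Definition reliable n m (init : 'I_n -> init_state)
  (gates : seq 'M['F_2]_(n + n)) (ms : 'I_m -> meas n) (v : 'cV['F_2]_m)
  : Prop :=
  ((meas_matrix gates ms *m v)^T \in <<Bset init>>%VS).

(* The logical Pauli product P of the selected measurements, back-propagated
   to initialization (time step 0): P^0. *)
Definition product_backprop n m (gates : seq 'M['F_2]_(n + n))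
  (ms : 'I_m -> meas n) (v : 'cV['F_2]_m) : pauli n :=
  \sum_(j < m | v j 0 == 1) meas_backprop gates (ms j).

(* Initial stabilizers of the decoding subgraph of P: the X-stabilizers of
   qubit j are included iff O_j^0 in {X,Y} (X-component 1), the
   Z-stabilizers iff O_j^0 in {Z,Y} (Z-component 1). *)
Definition in_init_subgraph n (P0 : pauli n) (j : 'I_n) (b : pbasis) : bool :=
  match b with
  | BX => xcomp P0 j == 1
  | BZ => zcomp P0 j == 1
  end.

Definition init_stab_plus1 (s : init_state) (b : pbasis) : bool :=
  match s, b with
  | InitT, _ => true
  | Init0, BZ => true
  | InitPlus, BX => true
  | _, _ => false
  end.

(** Reliability puts [P^0] in the span of the
    unit vectors [B], and [B] only contains the [b]-unit of qubit [j] when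
    the initial state of [j] fixes its [b]-stabilizers to [+1]; otherwise
    every vector of [B], hence all of their span, vanishes at that
    coordinate. *)
From mathcomp Require Import all_boot all_order all_algebra.
Set Implicit Arguments. Unset Strict Implicit.
Unset Printing Implicit Defensive.
Local Open Scope ring_scope.
Import GRing.Theory.

Lemma span_row_coord_eq0 (F : fieldType) k (S : seq 'rV[F]_k) (c : 'I_k)
    (x : 'rV[F]_k) :
  {in S, forall p : 'rV[F]_k, p 0 c = 0} -> x \in <<S>>%VS -> x 0 c = 0.
Proof.
move=> S_c0 x_span; rewrite (@coord_span _ _ _ (in_tuple S) x x_span).
rewrite summxE big1 // => i _.
by rewrite mxE S_c0 ?mulr0 // mem_nth.
Qed.

Lemma mulr_F2 (a x : 'F_2) : a * x = if x == 1 then a else 0.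
Proof. by case: x => [[|[|//]] ?]; case: a => [[|[|//]] ?]; apply/val_inj. Qed.

Lemma product_backpropE n m (gates : seq 'M['F_2]_(n + n))
    (ms : 'I_m -> meas n) (v : 'cV['F_2]_m) :
  product_backprop gates ms v = (meas_matrix gates ms *m v)^T.
Proof.
apply/rowP => k; rewrite !mxE summxE big_mkcond /=.
by apply: eq_bigr => j _; rewrite !mxE mulr_F2.
Qed.

Section PauliCoordinates.

Variable n : nat.

Definition pauli_index (j : 'I_n) (b : pbasis) : 'I_(n + n) :=
  if b is BX then lshift n j else rshift n j.

Lemma pauli_index_inj (i j : 'I_n) (b c : pbasis) :
  pauli_index i b = pauli_index j c -> i = j /\ b = c.
Proof.
case: b c => [] [] /=.
- by move/lshift_inj.
- by move/eqP; rewrite eq_lrshift.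
- by move/eqP; rewrite eq_rlshift.
- by move/rshift_inj.
Qed.

Lemma pauli_unitE (i : 'I_n) (b : pbasis) :
  pauli_unit i b = delta_mx 0 (pauli_index i b).
Proof. by case: b. Qed.

Lemma in_init_subgraphE (P : pauli n) (j : 'I_n) (b : pbasis) :
  in_init_subgraph P j b = (P 0 (pauli_index j b) == 1).
Proof. by case: b. Qed.

Lemma mem_Bset (init : 'I_n -> init_state) (p : pauli n) :
  p \in Bset init ->
  exists i b, p = pauli_unit i b /\ init_stab_plus1 (init i) b.
Proof.
case/flattenP => _ /mapP [i _ ->].
case init_i: (init i); rewrite /= !inE;
  [move/eqP | move/eqP | case/orP => /eqP] => ->.
- by exists i, BZ; rewrite init_i.
- by exists i, BX; rewrite init_i.
- by exists i, BX; rewrite init_i.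
- by exists i, BZ; rewrite init_i.
Qed.

Lemma Bset_coord_eq0 (init : 'I_n -> init_state) (j : 'I_n) (b : pbasis) :
  ~~ init_stab_plus1 (init j) b ->
  {in Bset init, forall p : pauli n, p 0 (pauli_index j b) = 0}.
Proof.
move=> not_plus1 p /mem_Bset [i [c [-> plus1]]].
rewrite pauli_unitE mxE /=; case: eqP => // /pauli_index_inj [ji bc].
by move: not_plus1; rewrite ji bc plus1.
Qed.

End PauliCoordinates.

Theorem lemma2 (n m : nat) (init : 'I_n -> init_state)
  (gates : seq 'M['F_2]_(n + n)) (hsymp : all (@symplectic n) gates)
  (ms : 'I_m -> meas n) (v : 'cV['F_2]_m) :
  reliable init gates ms v ->
  forall (j : 'I_n) (b : pbasis),
    in_init_subgraph (product_backprop gates ms v) j b ->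
    init_stab_plus1 (init j) b.
Proof.
rewrite /reliable -product_backpropE => P0_in_span j b.
apply: contraTT => not_plus1.
have P0_j_b := span_row_coord_eq0 (Bset_coord_eq0 not_plus1) P0_in_span.
by rewrite in_init_subgraphE P0_j_b.
Qed.
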